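(* Let $\mathcal{X}\subseteq\mathbb{R}^n$ be a nonempty closed convex set with Euclidean projection $\Pi_{\mathcal{X}}$, let $\Theta\subseteq\mathbb{R}^m$, and let $f:\mathbb{R}^n\times\mathbb{R}^m\to\mathbb{R}$ be differentiable and convex in its first argument. Assume: (A1) there is $G>0$ with $|f(x,\theta)-f(y,\theta)|\le G\|x-y\|$ for all $x,y\in\mathcal{X}$, $\theta\in\Theta$; (A2) there is $L>0$ with $f(y,\theta)\le f(x,\theta)+\nabla_x f(x,\theta)^T(y-x)+\frac{L}{2}\|y-x\|^2$ for all $x,y\in\mathcal{X}$, $\theta\in\Theta$; (A3) there is $\lambda>0$ with $f(y,\theta)\ge f(x,\theta)+\nabla_x f(x,\theta)^T(y-x)+\frac{\lambda}{2}\|y-x\|^2$ for all $x,y\in\mathcal{X}$, $\theta\in\Theta$; (A4) there is $C_\theta>0$ with $\|\nabla_x f(x,\theta_1)-\nabla_x f(x,\theta_2)\|\le C_\theta\|\theta_1-\theta_2\|$ for all $x\in\mathcal{X}$, $\theta_1,\theta_2\in\Theta$. Let $\theta_1,\dots,\theta_T\in\Theta$ be a sequence of parameters and, for $t=2,\dots,T$, let $\hat\theta_t\in\Theta$ be a prediction of $\theta_t$ made from $\theta_1,\dots,\theta_{t-1}$. Let $\eta>0$, $x_1\in\mathcal{X}$, and define (online predictive gradient descent) $x_{t+1}=\Pi_{\mathcal{X}}\big(x_t-\eta\nabla_x f(x_t,\hat\theta_{t+1})\big)$ for $t=1,\dots,T-1$. If $\eta\le 1/L$, then with $C_{\eta,\lambda}=\sqrt{1-\frac{2\lambda\eta}{1+\eta\lambda}}<1$,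 $$\mathbf{Reg}_D(\{x_t\})\le \frac{G\|x_1-x_1^\ast\|}{1-C_{\eta,\lambda}}+\frac{G\,C_{\eta,\lambda}}{1-C_{\eta,\lambda}}\mathcal{P}^\ast+\frac{G\eta C_\theta}{1-C_{\eta,\lambda}}P^\theta .$$
   Context: Write $f_t(x)=f(x,\theta_t)$ and $x_t^\ast=\arg\min_{x\in\mathcal{X}}f(x,\theta_t)$. The dynamic regret is $\mathbf{Reg}_D(\{x_t\})=\sum_{t=1}^T\big(f(x_t,\theta_t)-\min_{x\in\mathcal{X}}f(x,\theta_t)\big)$. The path length is $\mathcal{P}^\ast=\sum_{t=1}^{T-1}\|x_t^\ast-x_{t+1}^\ast\|$, and the parameter prediction regularity is $P^\theta=\sum_{t=2}^T\|\theta_t-\hat\theta_t\|$. All norms are Euclidean. *)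

From HB Require Import structures.
From mathcomp Require Import all_boot all_order all_algebra.
From mathcomp Require Import all_classical all_reals all_analysis.
Set Implicit Arguments. Unset Strict Implicit. Unset Printing Implicit Defensive.
Import Order.TTheory GRing.Theory Num.Theory.
Import numFieldNormedType.Exports.
Local Open Scope classical_set_scope.
Local Open Scope ring_scope.

Definition dotv {R : realType} {n : nat} (u v : 'rV[R]_n) : R :=
  \sum_(i < n) u ord0 i * v ord0 i.
Definition enorm {R : realType} {n : nat} (u : 'rV[R]_n) : R :=
  Num.sqrt (dotv u u).

Definition is_euclid_proj {R : realType} {n : nat} (X : set 'rV[R]_n)
  (p : 'rV[R]_n -> 'rV[R]_n) : Prop :=
  forall y, X (p y) /\ forall z, X z -> enorm (y - p y) <= enorm (y - z).

Definition is_gradient {R : realType} {n m : nat}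
  (f : 'rV[R]_n -> 'rV[R]_m -> R) (g : 'rV[R]_n -> 'rV[R]_m -> 'rV[R]_n) : Prop :=
  forall x th, differentiable (fun y => f y th) x /\
    forall v, 'D_v (fun y => f y th) x = dotv (g x th) v.

(* Every iterate is a projected gradient step for the true loss f(., theta_{t+1}),
   perturbed by the prediction error.  For an L-smooth, lam-strongly convex loss and
   eta <= 1/L the exact projected step contracts the distance to the minimizer by
   C = sqrt((1 - eta lam) / (1 + eta lam)); the projection is nonexpansive and the
   gradient is Cth-Lipschitz in theta, so predicting theta_{t+1} by thetahat_{t+1}
   costs at most eta Cth |theta_{t+1} - thetahat_{t+1}|.  With d_t = |x_t - x*_t| and
   the triangle inequality through x*_t,
     d_{t+1} <= C d_t + C |x*_t - x*_{t+1}| + eta Cth |theta_{t+1} - thetahat_{t+1}|,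
   so (1 - C) sum_t d_t <= d_1 + C P* + eta Cth P^theta, and the G-Lipschitz
   continuity of f bounds the dynamic regret by G sum_t d_t. *)

From HB Require Import structures.
From mathcomp Require Import all_boot all_order all_algebra.
From mathcomp Require Import all_classical all_reals all_analysis.
From mathcomp Require Import ring lra zify.
Import Order.TTheory GRing.Theory Num.Theory.
Import numFieldNormedType.Exports.
Local Open Scope classical_set_scope.
Local Open Scope ring_scope.

Set Implicit Arguments.
Unset Strict Implicit.
Unset Printing Implicit Defensive.

Section EuclideanGeometry.
Context {R : realType} {n : nat}.
Implicit Types u v w : 'rV[R]_n.

Lemma dotvC u v : dotv u v = dotv v u.
Proof. by apply: eq_bigr => i _; rewrite mulrC. Qed.

Lemma dotvDl u w v : dotv (u + w) v = dotv u v + dotv w v.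
Proof. by rewrite /dotv -big_split; apply: eq_bigr => i _; rewrite !mxE mulrDl. Qed.

Lemma dotvZl a u v : dotv (a *: u) v = a * dotv u v.
Proof. by rewrite /dotv mulr_sumr; apply: eq_bigr => i _; rewrite !mxE mulrA. Qed.

Lemma dotvNl u v : dotv (- u) v = - dotv u v.
Proof. by rewrite -scaleN1r dotvZl mulN1r. Qed.

Lemma dotvBl u w v : dotv (u - w) v = dotv u v - dotv w v.
Proof. by rewrite dotvDl dotvNl. Qed.

Lemma dotvDr u w v : dotv v (u + w) = dotv v u + dotv v w.
Proof. by rewrite dotvC dotvDl !(dotvC v). Qed.

Lemma dotvZr a u v : dotv v (a *: u) = a * dotv v u.
Proof. by rewrite dotvC dotvZl dotvC. Qed.

Lemma dotvNr u v : dotv v (- u) = - dotv v u.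
Proof. by rewrite dotvC dotvNl dotvC. Qed.

Lemma dotvBr u w v : dotv v (u - w) = dotv v u - dotv v w.
Proof. by rewrite dotvDr dotvNr. Qed.

Lemma dotvv_ge0 u : 0 <= dotv u u.
Proof. by apply: sumr_ge0 => i _; rewrite -expr2 sqr_ge0. Qed.

Lemma dotv_eq0_of_self u v : dotv v v = 0 -> dotv u v = 0.
Proof.
move=> /eqP; rewrite psumr_eq0; last by move=> i _; rewrite -expr2 sqr_ge0.
move=> /allP v0; apply: big1 => i _.
by have := v0 i (mem_index_enum i); rewrite mulf_eq0 orbb => /eqP ->; rewrite mulr0.
Qed.

Lemma cauchy_schwarz_sqr u v : dotv u v ^+ 2 <= dotv u u * dotv v v.
Proof.
have [v0|v_neq0] := eqVneq (dotv v v) 0.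
  by rewrite dotv_eq0_of_self // v0 mulr0 expr0n.
have v_gt0 : 0 < dotv v v by rewrite lt_neqAle eq_sym v_neq0 dotvv_ge0.
(* expand [0 <= |<v,v> u - <u,v> v|^2] *)
have := dotvv_ge0 (dotv v v *: u - dotv u v *: v).
rewrite !(dotvBl, dotvBr, dotvZl, dotvZr) (dotvC v u) => expansion_ge0.
have : 0 <= dotv v v * (dotv u u * dotv v v - dotv u v ^+ 2) by lra.
by rewrite pmulr_rge0 // subr_ge0.
Qed.

Lemma enorm_ge0 u : 0 <= enorm u.
Proof. exact: sqrtr_ge0. Qed.

Lemma enorm_sqr u : enorm u ^+ 2 = dotv u u.
Proof. by rewrite sqr_sqrtr // dotvv_ge0. Qed.

Lemma ler_enorm u v : (enorm u <= enorm v) = (dotv u u <= dotv v v).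
Proof. by rewrite /enorm ler_sqrt // dotvv_ge0. Qed.

Lemma cauchy_schwarz u v : dotv u v <= enorm u * enorm v.
Proof.
have [uv_le0|uv_gt0] := lerP (dotv u v) 0.
  by apply: le_trans uv_le0 _; apply: mulr_ge0; apply: enorm_ge0.
rewrite /enorm -sqrtrM ?dotvv_ge0 // -(ger0_norm (ltW uv_gt0)) -sqrtr_sqr.
by rewrite ler_sqrt ?mulr_ge0 ?dotvv_ge0 // cauchy_schwarz_sqr.
Qed.

Lemma ler_enormD u v : enorm (u + v) <= enorm u + enorm v.
Proof.
rewrite -(ler_pXn2r (_ : (0 < 2)%N)) ?nnegrE ?addr_ge0 ?enorm_ge0 //.
rewrite enorm_sqr sqrrD !enorm_sqr !(dotvDl, dotvDr) (dotvC v u).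
have := cauchy_schwarz u v; lra.
Qed.

Lemma enormZ a u : enorm (a *: u) = `|a| * enorm u.
Proof.
by rewrite /enorm dotvZl dotvZr mulrA -expr2 sqrtrM ?sqr_ge0 // sqrtr_sqr.
Qed.

End EuclideanGeometry.

Lemma ler0_of_le_vanishing_mul (R : realFieldType) (c e : R) :
  (forall s, 0 < s < 1 -> c <= s * e) -> c <= 0.
Proof.
move=> c_le; apply/ler_addgt0Pr => z z_gt0; rewrite add0r.
have [e_le0|e_gt0] := lerP e 0.
  have half01 : 0 < (2^-1 : R) < 1 by apply/andP; split; lra.
  by have := c_le _ half01; lra.
have ze_gt0 : 0 < z + e by lra.
have s01 : 0 < z / (z + e) < 1.
  by rewrite divr_gt0 //= ltr_pdivrMr // mul1r; lra.
apply: le_trans (c_le _ s01) _.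
by rewrite mulrAC ler_pdivrMr // ler_pM2l //; lra.
Qed.

Lemma sqrtr_le_mul (R : rcfType) (a b r : R) :
  0 <= a -> b <= r * a -> Num.sqrt b <= Num.sqrt r * Num.sqrt a.
Proof.
move=> a_ge0 b_le; have [r_ge0|r_lt0] := lerP 0 r.
  by rewrite -sqrtrM // ler_wsqrtr.
have /eqP -> : Num.sqrt b == 0.
  by rewrite sqrtr_eq0 (le_trans b_le) // mulr_le0_ge0 // ltW.
by rewrite ltr0_sqrtr // mul0r.
Qed.

Lemma convex_set_segment (R : numDomainType) (M : lmodType R) (A : set M)
    (x z : M) (s : R) :
  convex_set A -> A x -> A z -> 0 <= s -> s <= 1 -> A (x + s *: (z - x)).
Proof.
move=> convA Ax Az s_ge0 s_le1.
have s01 : Itv.spec (@Itv.num_sem R) (Itv.Real `[0%Z, 1%Z]) s.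
  by rewrite /Itv.spec /Itv.num_sem /= in_itv /= s_ge0 s_le1 ger0_real.
have := convA z x (Itv.Def s01); rewrite !inE => /(_ Az Ax).
by congr A; rewrite /conv /= /unstable.onem scalerBr scalerBl scale1r addrCA.
Qed.

Section EuclideanProjection.
Context {R : realType} {n : nat} (X : set 'rV[R]_n) (Pi : 'rV[R]_n -> 'rV[R]_n).
Hypotheses (convX : convex_set X) (projPi : is_euclid_proj X Pi).

Lemma euclid_proj_obtuse y z : X z -> dotv (y - Pi y) (z - Pi y) <= 0.
Proof.
move=> Xz; have [XPy Pi_min] := projPi y.
suff : 2 * dotv (y - Pi y) (z - Pi y) <= 0 by lra.
apply: (@ler0_of_le_vanishing_mul _ _ (dotv (z - Pi y) (z - Pi y))).
move=> s /andP[s_gt0 s_lt1].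
have := Pi_min _ (convex_set_segment convX XPy Xz (ltW s_gt0) (ltW s_lt1)).
rewrite ler_enorm opprD addrA.
move: (y - Pi y) (z - Pi y) => d e.
rewrite !(dotvBl, dotvBr, dotvZl, dotvZr) (dotvC e d) => dist_le.
have : s * (2 * dotv d e) <= s * (s * dotv e e) by lra.
by rewrite ler_pM2l.
Qed.

Lemma euclid_proj_nonexpansive a b : enorm (Pi a - Pi b) <= enorm (a - b).
Proof.
have obtuse_a := euclid_proj_obtuse a (proj1 (projPi b)).
have obtuse_b := euclid_proj_obtuse b (proj1 (projPi a)).
have : dotv (Pi a - Pi b) (Pi a - Pi b) <= dotv (a - b) (Pi a - Pi b).
  move: obtuse_a obtuse_b; rewrite !(dotvBl, dotvBr).
  rewrite ?(dotvC (Pi a) a) ?(dotvC (Pi b) a) ?(dotvC (Pi a) b) ?(dotvC (Pi b) b).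
  rewrite ?(dotvC (Pi b) (Pi a)) ?(dotvC b a); lra.
rewrite -enorm_sqr => sqr_le.
have := cauchy_schwarz (a - b) (Pi a - Pi b).
have := enorm_ge0 (Pi a - Pi b); have := enorm_ge0 (a - b); nra.
Qed.

Lemma euclid_proj_step_lipschitz x u v (eta : R) : 0 <= eta ->
  enorm (Pi (x - eta *: u) - Pi (x - eta *: v)) <= eta * enorm (v - u).
Proof.
move=> eta_ge0; apply: le_trans (euclid_proj_nonexpansive _ _) _.
have -> : x - eta *: u - (x - eta *: v) = eta *: (v - u).
  by rewrite scalerBr opprB addrC addrA subrK addrC.
by rewrite enormZ ger0_norm.
Qed.

End EuclideanProjection.

Section GradientStep.
Context {R : realType} {n : nat} (X : set 'rV[R]_n).
Implicit Types (F : 'rV[R]_n -> R) (gF : 'rV[R]_n -> 'rV[R]_n).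

Definition smooth_on F gF (L : R) := forall x y, X x -> X y ->
  F y <= F x + dotv (gF x) (y - x) + L / 2 * enorm (y - x) ^+ 2.

Definition strongly_convex_on F gF (lam : R) := forall x y, X x -> X y ->
  F x + dotv (gF x) (y - x) + lam / 2 * enorm (y - x) ^+ 2 <= F y.

Definition minimizer_on F xs := X xs /\ forall z, X z -> F xs <= F z.

Lemma strongly_convex_quadratic_growth F gF lam xs z :
  convex_set X -> strongly_convex_on F gF lam -> minimizer_on F xs -> X z ->
  lam / 2 * enorm (z - xs) ^+ 2 <= F z - F xs.
Proof.
move=> convX sconvF [Xxs xs_min] Xz; rewrite -subr_le0.
apply: (@ler0_of_le_vanishing_mul _ _ (lam / 2 * enorm (z - xs) ^+ 2)).
move=> s /andP[s_gt0 s_lt1].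
have Xw := convex_set_segment convX Xxs Xz (ltW s_gt0) (ltW s_lt1).
have to_z := sconvF _ _ Xw Xz; have to_xs := sconvF _ _ Xw Xxs.
have w_ge := xs_min _ Xw.
move: to_z to_xs w_ge.
have -> : z - (xs + s *: (z - xs)) = (1 - s) *: (z - xs).
  by rewrite scalerBl scale1r opprD addrA.
have -> : xs - (xs + s *: (z - xs)) = - s *: (z - xs).
  by rewrite opprD addrA subrr add0r scaleNr.
set w := xs + s *: (z - xs).
rewrite !enorm_sqr !(dotvZl, dotvZr).
set N := dotv (z - xs) (z - xs); set d := dotv (gF w) (z - xs).
move=> to_z to_xs w_ge.
(* the combination [s * to_z + (1 - s) * to_xs] cancels the gradient term [d] *)
have : s * ((1 - s) * (lam / 2 * N)) <= s * (F z - F xs).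
  have : 0 <= s * (F z - (F w + (1 - s) * d + lam / 2 * ((1 - s) * ((1 - s) * N)))).
    by apply: mulr_ge0; lra.
  have : 0 <= (1 - s) * (F xs - (F w + - s * d + lam / 2 * (- s * (- s * N)))).
    by apply: mulr_ge0; lra.
  nra.
rewrite ler_pM2l //; lra.
Qed.

Definition pgd_rate (lam eta : R) := Num.sqrt (1 - 2 * lam * eta / (1 + eta * lam)).

Lemma pgd_rate_ge0 lam eta : 0 <= pgd_rate lam eta.
Proof. exact: sqrtr_ge0. Qed.

Lemma pgd_rate_lt1 lam eta : 0 < lam -> 0 < eta -> pgd_rate lam eta < 1.
Proof.
move=> lam_gt0 eta_gt0; rewrite /pgd_rate -[ltRHS]sqrtr1 ltr_sqrt ?ltr01 //.
have : 0 < 2 * lam * eta / (1 + eta * lam).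
  by rewrite divr_gt0 ?mulr_gt0 // ltr_pwDr ?mulr_gt0.
lra.
Qed.

Lemma proj_grad_step_contraction Pi F gF L lam eta x xs :
  convex_set X -> is_euclid_proj X Pi -> 0 < lam -> 0 < eta -> 0 < L -> eta <= 1 / L ->
  smooth_on F gF L -> strongly_convex_on F gF lam -> minimizer_on F xs -> X x ->
  enorm (Pi (x - eta *: gF x) - xs) <= pgd_rate lam eta * enorm (x - xs).
Proof.
move=> convX projPi lam_gt0 eta_gt0 L_gt0 etaL smoothF sconvF minxs Xx.
have Xy := proj1 (projPi (x - eta *: gF x)).
have obtuse := euclid_proj_obtuse convX projPi (x - eta *: gF x) (proj1 minxs).
have growth := strongly_convex_quadratic_growth convX sconvF minxs Xy.
set y := Pi (x - eta *: gF x) in Xy obtuse growth *.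
have upper := smoothF _ _ Xx Xy; have lower := sconvF _ _ Xx (proj1 minxs).
have etaL1 : eta * L <= 1 by rewrite -ler_pdivlMr // mul1r -[leRHS]mul1r.
have key : (1 + eta * lam) * dotv (y - xs) (y - xs)
           <= (1 - eta * lam) * dotv (x - xs) (x - xs).
  move: obtuse upper lower growth.
  have -> : y - x = (y - xs) - (x - xs) by rewrite opprB addrA subrK.
  have -> : xs - x = - (x - xs) by rewrite opprB.
  have -> : x - eta *: gF x - y = (x - xs) - (y - xs) - eta *: gF x.
    by rewrite opprB addrA subrK addrAC.
  have -> : xs - y = - (y - xs) by rewrite opprB.
  have := dotvv_ge0 ((y - xs) - (x - xs)).
  move: (y - xs) (x - xs) (gF x) => b a v.
  rewrite !enorm_sqr !(dotvBl, dotvBr, dotvZl, dotvZr, dotvNl, dotvNr).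
  rewrite ?(dotvC b a) ?(dotvC a v) ?(dotvC b v).
  move=> ba_ge0 obtuse upper lower growth.
  (* [eta <= 1 / L] lets the smoothness term be absorbed by the projection inequality *)
  have : eta * (L * (dotv b b - dotv a b - (dotv a b - dotv a a)))
         <= dotv b b - dotv a b - (dotv a b - dotv a a).
    by rewrite mulrA -[leRHS]mul1r ler_wpM2r.
  have : 0 <= eta * (F y - F xs - lam / 2 * dotv b b) by apply: mulr_ge0; lra.
  nra.
have pos : 0 < 1 + eta * lam by rewrite ltr_pwDr ?mulr_gt0.
apply: sqrtr_le_mul; first exact: dotvv_ge0.
rewrite -(ler_pM2l pos) mulrA (mulrC _ (1 - _)).
have -> : (1 - 2 * lam * eta / (1 + eta * lam)) * (1 + eta * lam) = 1 - eta * lam.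
  by field; rewrite gt_eqF.
exact: key.
Qed.

End GradientStep.

Lemma sum_le_of_contraction (R : realDomainType) (d b : nat -> R) (C : R) (T : nat) :
  (forall t, 0 <= d t) -> 0 <= C ->
  (forall t, (1 <= t < T)%N -> d t.+1 <= C * d t + b t) ->
  (1 - C) * \sum_(1 <= t < T.+1) d t <= d 1%N + \sum_(1 <= t < T) b t.
Proof.
move=> d_ge0 C_ge0 d_rec; case: T d_rec => [|T] d_rec.
  by rewrite !big_geq // mulr0 addr0.
have shifted : \sum_(1 <= t < T.+1) d t.+1 <= C * \sum_(1 <= t < T.+1) d t
                                             + \sum_(1 <= t < T.+1) b t.
  by rewrite mulr_sumr -big_split; apply: ler_sum_nat.
have S_first : \sum_(1 <= t < T.+2) d t = d 1%N + \sum_(1 <= t < T.+1) d t.+1.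
  by rewrite big_nat_recl.
have S_last : \sum_(1 <= t < T.+2) d t = \sum_(1 <= t < T.+1) d t + d T.+1.
  by rewrite big_nat_recr.
rewrite mulrBl mul1r {1}S_first S_last mulrDr.
have := mulr_ge0 C_ge0 (d_ge0 T.+1); lra.
Qed.

Section OnlinePredictiveGradientDescent.
Variables (R : realType) (n m : nat).
Variables (X : set 'rV[R]_n) (Pi : 'rV[R]_n -> 'rV[R]_n) (Theta : set 'rV[R]_m).
Variables (f : 'rV[R]_n -> 'rV[R]_m -> R) (g : 'rV[R]_n -> 'rV[R]_m -> 'rV[R]_n).
Variables (G L lam Cth eta : R) (T : nat) (theta thetahat : nat -> 'rV[R]_m).
Variables (x xstar : nat -> 'rV[R]_n).

Hypotheses (projPi : is_euclid_proj X Pi) (x1_in : X (x 1%N)).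
Hypothesis x_step : forall t, (1 <= t <= T.-1)%N ->
  x t.+1 = Pi (x t - eta *: g (x t) (thetahat t.+1)).

Lemma opgd_in_set t : (1 <= t <= T)%N -> X (x t).
Proof.
case: t => [//|[//|t] /andP[_ tT]].
by rewrite x_step; [exact: (proj1 (projPi _)) | apply/andP; split; lia].
Qed.

Hypothesis f_lipschitz : forall x1 y1 th, X x1 -> X y1 -> Theta th ->
  `|f x1 th - f y1 th| <= G * enorm (x1 - y1).
Hypothesis theta_in : forall t, (1 <= t <= T)%N -> Theta (theta t).
Hypothesis xstar_min : forall t, (1 <= t <= T)%N ->
  minimizer_on X (f^~ (theta t)) (xstar t).

Lemma opgd_regret_le_dist :
  \sum_(1 <= t < T.+1) (f (x t) (theta t) - f (xstar t) (theta t))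
    <= G * \sum_(1 <= t < T.+1) enorm (x t - xstar t).
Proof.
rewrite mulr_sumr; apply: ler_sum_nat => t /andP[t_ge1 tT].
have tT' : (1 <= t <= T)%N by apply/andP; split; lia.
apply: le_trans (ler_norm _) _.
by apply: f_lipschitz; [exact: opgd_in_set | exact: (proj1 (xstar_min tT')) | exact: theta_in].
Qed.

Hypothesis convX : convex_set X.
Hypotheses (lam_gt0 : 0 < lam) (eta_gt0 : 0 < eta) (L_gt0 : 0 < L) (etaL : eta <= 1 / L).
Hypothesis f_smooth : forall x1 y1 th, X x1 -> X y1 -> Theta th ->
  f y1 th <= f x1 th + dotv (g x1 th) (y1 - x1) + L / 2 * enorm (y1 - x1) ^+ 2.
Hypothesis f_sconvex : forall x1 y1 th, X x1 -> X y1 -> Theta th ->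
  f y1 th >= f x1 th + dotv (g x1 th) (y1 - x1) + lam / 2 * enorm (y1 - x1) ^+ 2.
Hypothesis g_lipschitz : forall x1 th1 th2, X x1 -> Theta th1 -> Theta th2 ->
  enorm (g x1 th1 - g x1 th2) <= Cth * enorm (th1 - th2).
Hypothesis thetahat_in : forall t, (2 <= t <= T)%N -> Theta (thetahat t).

Lemma opgd_dist_rec t : (1 <= t < T)%N ->
  enorm (x t.+1 - xstar t.+1) <= pgd_rate lam eta * enorm (x t - xstar t)
    + (pgd_rate lam eta * enorm (xstar t - xstar t.+1)
       + eta * Cth * enorm (theta t.+1 - thetahat t.+1)).
Proof.
move=> /andP[t_ge1 tT].
have Xxt : X (x t) by apply: opgd_in_set; apply/andP; split; lia.
have Theta_t1 : Theta (theta t.+1) by apply: theta_in; apply/andP; split; lia.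
have Theta_hat : Theta (thetahat t.+1) by apply: thetahat_in; apply/andP; split; lia.
have min_t1 := xstar_min (_ : (1 <= t.+1 <= T)%N).
rewrite x_step; last by apply/andP; split; lia.
set y := Pi (x t - eta *: g (x t) (theta t.+1)).
have prediction_err : enorm (Pi (x t - eta *: g (x t) (thetahat t.+1)) - y)
                      <= eta * Cth * enorm (theta t.+1 - thetahat t.+1).
  apply: le_trans (euclid_proj_step_lipschitz convX projPi _ _ _ (ltW eta_gt0)) _.
  by rewrite -mulrA ler_pM2l // g_lipschitz.
have contraction : enorm (y - xstar t.+1) <= pgd_rate lam eta * enorm (x t - xstar t.+1).
  apply: (proj_grad_step_contraction (F := f^~ (theta t.+1)) (gF := g^~ (theta t.+1))
           convX projPi lam_gt0 eta_gt0 L_gt0 etaL) => //.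
  - by move=> ? ? ? ?; apply: f_smooth.
  - by move=> ? ? ? ?; apply: f_sconvex.
  - by apply: min_t1; apply/andP; split; lia.
have drift : enorm (x t - xstar t.+1) <= enorm (x t - xstar t) + enorm (xstar t - xstar t.+1).
  by have := ler_enormD (x t - xstar t) (xstar t - xstar t.+1); rewrite addrA subrK.
have := ler_enormD (Pi (x t - eta *: g (x t) (thetahat t.+1)) - y) (y - xstar t.+1).
rewrite addrA subrK.
have := ler_wpM2l (pgd_rate_ge0 lam eta) drift.
lra.
Qed.

End OnlinePredictiveGradientDescent.

Theorem theorem1 (R : realType) (n m : nat)
  (X : set 'rV[R]_n) (Pi : 'rV[R]_n -> 'rV[R]_n) (Theta : set 'rV[R]_m)
  (f : 'rV[R]_n -> 'rV[R]_m -> R) (g : 'rV[R]_n -> 'rV[R]_m -> 'rV[R]_n)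
  (G L lam Cth eta : R) (T : nat)
  (theta thetahat : nat -> 'rV[R]_m)
  (predictor : nat -> seq 'rV[R]_m -> 'rV[R]_m)
  (x xstar : nat -> 'rV[R]_n) :
  X !=set0 -> closed X -> convex_set X ->
  is_euclid_proj X Pi ->
  is_gradient f g ->
  (forall th, convex_function setT (fun y => f y th)) ->
  (* (A1) *)
  0 < G ->
  (forall x1 y1 th, X x1 -> X y1 -> Theta th ->
     `|f x1 th - f y1 th| <= G * enorm (x1 - y1)) ->
  (* (A2) *)
  0 < L ->
  (forall x1 y1 th, X x1 -> X y1 -> Theta th ->
     f y1 th <= f x1 th + dotv (g x1 th) (y1 - x1) + L / 2 * enorm (y1 - x1) ^+ 2) ->
  (* (A3) *)
  0 < lam ->
  (forall x1 y1 th, X x1 -> X y1 -> Theta th ->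
     f y1 th >= f x1 th + dotv (g x1 th) (y1 - x1) + lam / 2 * enorm (y1 - x1) ^+ 2) ->
  (* (A4) *)
  0 < Cth ->
  (forall x1 th1 th2, X x1 -> Theta th1 -> Theta th2 ->
     enorm (g x1 th1 - g x1 th2) <= Cth * enorm (th1 - th2)) ->
  (1 <= T)%N ->
  (forall t, (1 <= t <= T)%N -> Theta (theta t)) ->
  (* predictions made from theta_1, ..., theta_{t-1} *)
  (forall t, (2 <= t <= T)%N ->
     thetahat t = predictor t [seq theta s | s <- iota 1 t.-1]) ->
  (forall t, (2 <= t <= T)%N -> Theta (thetahat t)) ->
  (* x*_t = argmin_{x in X} f(x, theta_t) *)
  (forall t, (1 <= t <= T)%N ->
     X (xstar t) /\ forall z, X z -> f (xstar t) (theta t) <= f z (theta t)) ->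
  (* online predictive gradient descent *)
  0 < eta ->
  X (x 1%N) ->
  (forall t, (1 <= t <= T.-1)%N ->
     x t.+1 = Pi (x t - eta *: g (x t) (thetahat t.+1))) ->
  eta <= 1 / L ->
  let C := Num.sqrt (1 - 2 * lam * eta / (1 + eta * lam)) in
  C < 1 /\
  \sum_(1 <= t < T.+1) (f (x t) (theta t) - f (xstar t) (theta t))
    <= G * enorm (x 1%N - xstar 1%N) / (1 - C)
       + G * C / (1 - C) * \sum_(1 <= t < T) enorm (xstar t - xstar t.+1)
       + G * eta * Cth / (1 - C) * \sum_(2 <= t < T.+1) enorm (theta t - thetahat t).
Proof.
move=> _ _ convX projPi _ _ G_gt0 f_lip L_gt0 f_smooth lam_gt0 f_sconvex _ g_lip _
  theta_in _ thetahat_in xstar_min eta_gt0 x1_in x_step etaL C.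
have C_ge0 : 0 <= C := pgd_rate_ge0 lam eta.
have C_lt1 : C < 1 := pgd_rate_lt1 lam_gt0 eta_gt0.
split=> //.
set P := \sum_(1 <= t < T) enorm (xstar t - xstar t.+1).
set E := \sum_(2 <= t < T.+1) enorm (theta t - thetahat t).
set d1 := enorm (x 1%N - xstar 1%N).
have dist_sum : (1 - C) * \sum_(1 <= t < T.+1) enorm (x t - xstar t)
                <= d1 + C * P + eta * Cth * E.
  have E_shift : E = \sum_(1 <= t < T) enorm (theta t.+1 - thetahat t.+1).
    by rewrite /E big_add1.
  rewrite E_shift -addrA.
  apply: le_trans (sum_le_of_contraction (fun t => enorm_ge0 _) C_ge0
    (opgd_dist_rec projPi x1_in x_step theta_in xstar_min convX lam_gt0 eta_gt0
       L_gt0 etaL f_smooth f_sconvex g_lip thetahat_in)) _.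
  by rewrite big_split /= -!mulr_sumr.
apply: le_trans (opgd_regret_le_dist (g := g) (thetahat := thetahat) projPi x1_in x_step
                   f_lip theta_in xstar_min) _.
have -> : G * d1 / (1 - C) + G * C / (1 - C) * P + G * eta * Cth / (1 - C) * E
          = G * ((d1 + C * P + eta * Cth * E) / (1 - C)).
  by field; rewrite subr_eq0 gt_eqF.
rewrite ler_pM2l // ler_pdivlMr ?subr_gt0 // mulrC.
exact: dist_sum.
Qed.
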